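(* Let $\Gamma$ be a finite collection of supports $\gamma\subseteq\{1,\dots,n\}$, and let $\mathcal N_\Gamma=\circ_{\gamma\in\Gamma}\mathcal N_\gamma$ be a total Pauli channel that is a composition of local Pauli channels $\mathcal N_\gamma$ with supports $\gamma\in\Gamma$, all satisfying Assumption (A). Let a stabilizer (subsystem) code with measured stabilizer subgroup $\mathcal M$ be given. Then, using the syndrome data (i.e. the syndrome expectation values $\Lambda(M)$, $M\in\mathcal M$): 1. The total channel $\mathcal N_\Gamma$ is learnable if and only if every error $e\in\overline{\mathcal E}_\Gamma$ has a syndrome that is nontrivial and distinct from the syndromes of all other errors in $\overline{\mathcal E}_\Gamma$. 2. A given individual channel $\mathcal N_\gamma$ is learnable if and only if every $e\in\mathcal E_\gamma$ produces a syndrome that is nontrivial and unique among the syndromes of all errors in $\mathcal E_\Gamma$. 3. For every nontrivial syndrome class $C\in\mathcal C^*$, the syndrome class error rate $P_C=\sum_{e\in C}p_e$ can be learned up to an $\mathcal O(\|\vec p^{(\Gamma_C)}\|^2)$ deviation, i.e. there is a quantity uniquely determined by the syndrome expectation values that differs from $P_C$ by $\mathcal O(\|\vec p^{(\Gamma_C)}\|^2)$.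
   Context: $\mathcal P_n=\{I,X,Y,Z\}^{\otimes n}$ denotes the $n$-qubit Pauli operators without phases. For $A,B\in\mathcal P_n$, $[[A,B]]=1$ if $A,B$ commute and $-1$ otherwise; $\langle A,B\rangle=0$ if they commute and $1$ otherwise. A Pauli channel acts as $\rho\mapsto\sum_{e\in\mathcal P_n}P(e)e\rho e^\dagger$. For each $\gamma\in\Gamma$, the local channel $\mathcal N_\gamma$ has error distribution $P_\gamma$ on $\mathcal P_n$ with $P_\gamma(e)=0$ unless $\mathrm{supp}(e)\subseteq\gamma$; the total channel is the composition, whose error distribution $P$ is the convolution of the $P_\gamma$ over the Pauli group. Assumption (A): for every $\gamma\in\Gamma$, $P_\gamma(I)>1/2$, and $P_\gamma(e)>0$ for every non-identity $e$ with $\mathrm{supp}(e)\subseteq\gamma$. Let $\mathcal E_\gamma$ be the set of non-identity Paulis supported in $\gamma$; $\mathcal E_\Gamma$ is the disjoint union of the $\mathcal E_\gamma$ (each element $e$ remembers its channel $\gamma_e$, so the same operator from different channels gives distinct elements), and $\overline{\mathcal E}_\Gamma=\bigcup_\gamma\mathcal E_\gamma$ as a set of operators. Local error rates: $p_e=P_{\gamma_e}(e)$ for $e\in\mathcal E_\Gamma$. The code has stabilizer group $\mathcal S$ (the center of the gauge group, an abelian subgroup of $\mathcal P_n$); a codeword is stabilized by $\mathcal S$. Only a subgroup $\mathcal M\le\mathcal S$ generated by measured generators $M_1,\dots,M_m$ is measured. The experiment (prepare a codeword, apply $\mathcal N_\Gamma$, perfectly measure the generators) is repeated; the syndrome statistics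 are equivalently given by the syndrome expectation values $\Lambda(M)=\sum_e P(e)[[e,M]]$ for $M\in\mathcal M$. A quantity is learnable if it is uniquely determined by $(\Lambda(M))_{M\in\mathcal M}$ among all channels of this form (with the given $\Gamma$) satisfying Assumption (A). The syndrome of $e$ is $(\langle e,M\rangle)_{M\in\mathcal M}$ (equivalently its commutation with $M_1,\dots,M_m$); an error is detectable if its syndrome is nontrivial. Syndrome classes are the equivalence classes of $\mathcal E_\Gamma$ under equality of syndromes; $C_0$ is the class of trivial syndrome and $\mathcal C^*$ the set of nontrivial classes. For $C\in\mathcal C^*$, $\Gamma_C=\{\gamma\in\Gamma:\mathcal E_\gamma\cap C\ne\emptyset\}$ and $\vec p^{(\Gamma_C)}$ is the vector of error rates $p_e$ for $e\in\bigcup_{\gamma\in\Gamma_C}\mathcal E_\gamma$. *)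

From HB Require Import structures.
From mathcomp Require Import all_boot all_order all_algebra.
From mathcomp Require Import reals.
Set Implicit Arguments. Unset Strict Implicit. Unset Printing Implicit Defensive.
Import Order.TTheory GRing.Theory Num.Theory.
Local Open Scope ring_scope.

Inductive pauli1 := PI | PX | PY | PZ.

Definition pauli1_enc (a : pauli1) : bool * bool :=
  match a with PI => (false, false) | PX => (true, false)
             | PY => (true, true) | PZ => (false, true) end.
Definition pauli1_dec (b : bool * bool) : pauli1 :=
  match b with (false, false) => PI | (true, false) => PX
             | (true, true) => PY | (false, true) => PZ end.
Lemma pauli1_encK : cancel pauli1_enc pauli1_dec. Proof. by case. Qed.
HB.instance Definition _ := Equality.copy pauli1 (can_type pauli1_encK).
HB.instance Definition _ := Choice.copy pauli1 (can_type pauli1_encK).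
HB.instance Definition _ := Countable.copy pauli1 (can_type pauli1_encK).
HB.instance Definition _ := Finite.copy pauli1 (can_type pauli1_encK).

(** product of single-qubit Paulis, phases dropped *)
Definition mul1 (a b : pauli1) : pauli1 :=
  match a, b with
  | PI, x | x, PI => x
  | PX, PX | PY, PY | PZ, PZ => PI
  | PX, PY | PY, PX => PZ
  | PY, PZ | PZ, PY => PX
  | PZ, PX | PX, PZ => PY
  end.

Definition anti1 (a b : pauli1) : bool := [&& a != PI, b != PI & a != b].

Definition pauli (n : nat) := {ffun 'I_n -> pauli1}.

Definition pid (n : nat) : pauli n := [ffun => PI].
Definition pmul (n : nat) (a b : pauli n) : pauli n := [ffun i => mul1 (a i) (b i)].
Definition supp (n : nat) (e : pauli n) : {set 'I_n} := [set i | e i != PI].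

Definition anticomm (n : nat) (a b : pauli n) : bool :=
  odd #|[set i | anti1 (a i) (b i)]|.
Definition commsign {R : nzRingType} (n : nat) (a b : pauli n) : R :=
  if anticomm a b then -1 else 1.

Definition pdist (R : nzRingType) (n : nat) := {ffun pauli n -> R}.

Definition conv (R : nzRingType) (n : nat) (p q : pdist R n) : pdist R n :=
  [ffun e => \sum_(a : pauli n) p a * q (pmul a e)].
Definition dirac_id (R : nzRingType) (n : nat) : pdist R n :=
  [ffun e => if e == pid n then 1 else 0].

(** A local Pauli channel with support gamma satisfying Assumption (A) *)
Definition valid_local (R : realType) (n : nat) (gamma : {set 'I_n})
    (p : pdist R n) : Prop :=
  [/\ (forall e, 0 <= p e),
      \sum_e p e = 1,
      (forall e, ~~ (supp e \subset gamma) -> p e = 0),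
      p (pid n) > 1 / 2 &
      (forall e, e != pid n -> supp e \subset gamma -> 0 < p e)].

Definition valid_family (R : realType) (n : nat) (Gamma : {set {set 'I_n}})
    (P : {set 'I_n} -> pdist R n) : Prop :=
  forall gamma, gamma \in Gamma -> valid_local gamma (P gamma).

Definition total_dist (R : nzRingType) (n : nat) (Gamma : {set {set 'I_n}})
    (P : {set 'I_n} -> pdist R n) : pdist R n :=
  \big[@conv R n/dirac_id R n]_(gamma in Gamma) P gamma.

(** the element M_S = prod_{i in S} M_i of the measured group; every element
    of M is of this form *)
Definition mgen (n m : nat) (gens : 'I_m -> pauli n) (S : {set 'I_m}) : pauli n :=
  \big[@pmul n/pid n]_(i in S) gens i.

Definition Lambda (R : nzRingType) (n : nat) (P : pdist R n) (M : pauli n) : R :=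
  \sum_e P e * commsign e M.

Definition syndrome_data (R : nzRingType) (n m : nat) (gens : 'I_m -> pauli n)
    (Gamma : {set {set 'I_n}}) (P : {set 'I_n} -> pdist R n)
    : {ffun {set 'I_m} -> R} :=
  [ffun S => Lambda (total_dist Gamma P) (mgen gens S)].

Definition learnable (R : realType) (T : Type) (n m : nat) (gens : 'I_m -> pauli n)
    (Gamma : {set {set 'I_n}}) (Q : ({set 'I_n} -> pdist R n) -> T) : Prop :=
  forall P P', valid_family Gamma P -> valid_family Gamma P' ->
    syndrome_data gens Gamma P = syndrome_data gens Gamma P' -> Q P = Q P'.

Definition syndrome (n m : nat) (gens : 'I_m -> pauli n) (e : pauli n)
    : {ffun 'I_m -> bool} := [ffun i => anticomm e (gens i)].
Definition trivial_syndrome (m : nat) : {ffun 'I_m -> bool} := [ffun => false].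

Definition in_Egamma (n : nat) (gamma : {set 'I_n}) (e : pauli n) : bool :=
  (e != pid n) && (supp e \subset gamma).
Definition in_Ebar (n : nat) (Gamma : {set {set 'I_n}}) (e : pauli n) : bool :=
  [exists gamma in Gamma, in_Egamma gamma e].

(** Syndrome class C_s of E_Gamma with syndrome s: the pairs (gamma, e) with
    gamma in Gamma, e in E_gamma, syndrome e = s. *)
Definition GammaC (n m : nat) (gens : 'I_m -> pauli n) (Gamma : {set {set 'I_n}})
    (s : {ffun 'I_m -> bool}) : {set {set 'I_n}} :=
  [set gamma in Gamma | [exists e, in_Egamma gamma e && (syndrome gens e == s)]].

Definition classRate (R : nzRingType) (n m : nat) (gens : 'I_m -> pauli n)
    (Gamma : {set {set 'I_n}}) (P : {set 'I_n} -> pdist R n)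
    (s : {ffun 'I_m -> bool}) : R :=
  \sum_(gamma in Gamma) \sum_(e | in_Egamma gamma e && (syndrome gens e == s)) P gamma e.

Definition normsqC (R : nzRingType) (n m : nat) (gens : 'I_m -> pauli n)
    (Gamma : {set {set 'I_n}}) (P : {set 'I_n} -> pdist R n)
    (s : {ffun 'I_m -> bool}) : R :=
  \sum_(gamma in GammaC gens Gamma s) \sum_(e | in_Egamma gamma e) (P gamma e) ^+ 2.

(* The syndrome expectation values are the Fourier transform [Lambda] of the
   error distribution, sampled on the measured group, and convolution of channels
   becomes the pointwise product of their transforms. Under Assumption (A) every
   local [Lambda] is positive, so [ln Lambda] of the total channel is the sum of
   the local ones: its Fourier coefficients are sums of local "logarithmic
   coefficients", each supported in its own channel. Fourier inversion over the
   measured group shows that the data determine exactly the sums of these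
   coefficients over the errors of a given syndrome. With unique syndromes every
   coefficient is read off, and the coefficients determine the channels. When two
   errors share a syndrome, moving weight between them inside one channel, or
   multiplying the [Lambda]s of two channels by mutually inverse factors that
   agree on the measured group, changes the channels but not the data. Finally a
   logarithmic coefficient differs from the error rate by O(r^2), r the
   non-identity rate of its channel, and r^2 <= #|P_n| * sum p_e^2 by
   Cauchy-Schwarz. *)

From HB Require Import structures.
From mathcomp Require Import all_boot all_order all_algebra.
From mathcomp Require Import reals exp.
From mathcomp Require Import ring lra.
Import Order.TTheory GRing.Theory Num.Theory.
Local Open Scope ring_scope.
Set Implicit Arguments. Unset Strict Implicit. Unset Printing Implicit Defensive.

(** * Commutation characters of the Pauli group *)

Lemma odd_card_addb (T : finType) (p q : pred T) :
  odd #|[set i | p i (+) q i]| = odd #|[set i | p i]| (+) odd #|[set i | q i]|.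
Proof.
have card_sum (r : pred T) : #|[set i | r i]| = (\sum_i r i)%N.
  by rewrite -sum1_card big_mkcond; apply: eq_bigr => i _; rewrite inE; case: (r i).
have split_xor : (\sum_i (p i (+) q i : nat) + 2 * \sum_i (p i && q i : nat)
                  = \sum_i p i + \sum_i q i)%N.
  by rewrite big_distrr -!big_split; apply: eq_bigr => i _; case: (p i); case: (q i).
by rewrite !card_sum -oddD -split_xor oddD oddM andFb addbF.
Qed.

Lemma sumr_flip_eq0 (R : numDomainType) (T : finType) (f : T -> T) (F : T -> R) :
  injective f -> (forall x, F (f x) = - F x) -> \sum_x F x = 0.
Proof.
move=> f_inj FfN; apply/eqP; rewrite -eqNr; apply/eqP.
by rewrite -sumrN [RHS](reindex_inj f_inj); apply: eq_bigr => x _; rewrite FfN.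
Qed.

Lemma mul1C : commutative mul1. Proof. by do 2 case. Qed.
Lemma mul1_idl : left_id PI mul1. Proof. by case. Qed.
Lemma mul1_idr : right_id PI mul1. Proof. by case. Qed.
Lemma mul1K a : cancel (mul1 a) (mul1 a). Proof. by case: a; case. Qed.
Lemma anti1C a b : anti1 a b = anti1 b a. Proof. by case: a; case: b. Qed.
Lemma anti1Ml a b c : anti1 (mul1 a b) c = anti1 a c (+) anti1 b c.
Proof. by case: a; case: b; case: c. Qed.
Lemma anti1_idl c : anti1 PI c = false. Proof. by case: c. Qed.

Definition anti_partner1 (a : pauli1) : pauli1 := if a == PX then PZ else PX.

Lemma anti1_partner a : a != PI -> anti1 a (anti_partner1 a).
Proof. by case: a. Qed.

Section PauliGroup.
Variable n : nat.
Implicit Types a b c e M : pauli n.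

Lemma pmulE a b i : pmul a b i = mul1 (a i) (b i). Proof. by rewrite ffunE. Qed.
Lemma pidE i : pid n i = PI. Proof. by rewrite ffunE. Qed.

Lemma pmulC : commutative (@pmul n).
Proof. by move=> a b; apply/ffunP=> i; rewrite !pmulE mul1C. Qed.
Lemma pmul_idl : left_id (pid n) (@pmul n).
Proof. by move=> a; apply/ffunP=> i; rewrite pmulE pidE mul1_idl. Qed.
Lemma pmul_idr : right_id (pid n) (@pmul n).
Proof. by move=> a; rewrite pmulC pmul_idl. Qed.
Lemma pmulK a : cancel (@pmul n a) (pmul a).
Proof. by move=> b; apply/ffunP=> i; rewrite !pmulE mul1K. Qed.
Lemma pmulKr a : cancel ((@pmul n)^~ a) ((@pmul n)^~ a).
Proof. by move=> b; rewrite /= pmulC (pmulC b) pmulK. Qed.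
Lemma pmulI a : injective (@pmul n a). Proof. exact: can_inj (pmulK a). Qed.
Lemma pmulIr a : injective ((@pmul n)^~ a). Proof. exact: can_inj (pmulKr a). Qed.
Lemma pmulxx a : pmul a a = pid n.
Proof. by apply/ffunP=> i; rewrite pmulE pidE; case: (a i). Qed.
Lemma pmul_eq_id a b : (pmul a b == pid n) = (a == b).
Proof. by apply/eqP/eqP => [ab1|->]; [rewrite -(pmulK a b) ab1 pmul_idr | exact: pmulxx]. Qed.

Lemma anticommC a b : anticomm a b = anticomm b a.
Proof. by rewrite /anticomm; congr odd; apply: eq_card => i; rewrite !inE anti1C. Qed.
Lemma anticommMl a b c : anticomm (pmul a b) c = anticomm a c (+) anticomm b c.
Proof.
rewrite /anticomm -odd_card_addb; congr odd.
by apply: eq_card => i; rewrite !inE pmulE anti1Ml.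
Qed.
Lemma anticomm_idl c : anticomm (pid n) c = false.
Proof.
rewrite /anticomm (_ : [set _ | _] = set0) ?cards0 //.
by apply/setP=> i; rewrite !inE pidE anti1_idl.
Qed.

Definition site (i : 'I_n) (b : pauli1) : pauli n := [ffun j => if j == i then b else PI].

Lemma anticomm_site_partner a i : a i != PI -> anticomm a (site i (anti_partner1 (a i))).
Proof.
move=> ai; rewrite /anticomm (_ : [set _ | _] = [set i]) ?cards1 //.
apply/setP=> j; rewrite !inE ffunE; case: eqP => [->|_]; first by rewrite anti1_partner.
by rewrite anti1C anti1_idl.
Qed.

Lemma exists_anticomm a : a != pid n -> exists M, anticomm a M.
Proof.
move=> a1; have [i ai] : exists i, a i != PI.
  apply/existsP; apply: contraR a1 => /existsPn a1.
  by apply/eqP/ffunP=> i; rewrite pidE; apply/eqP/negPn.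
by exists (site i (anti_partner1 (a i))); apply: anticomm_site_partner.
Qed.

Lemma supp_id : supp (pid n) = set0.
Proof. by apply/setP=> i; rewrite !inE pidE eqxx. Qed.

Lemma supp_pmul_sub (g : {set 'I_n}) a b :
  supp a \subset g -> supp b \subset g -> supp (pmul a b) \subset g.
Proof.
move=> /subsetP ag /subsetP bg; apply/subsetP=> i; rewrite inE pmulE.
have [->|ai _] := eqVneq (a i) PI; last by apply: ag; rewrite inE.
by rewrite mul1_idl => bi; apply: bg; rewrite inE.
Qed.

Section Characters.
Context {R : nzRingType}.
Local Notation chi := (@commsign R n).

Lemma commsignC a M : chi a M = chi M a.
Proof. by rewrite /commsign anticommC. Qed.
Lemma commsignMl a b M : chi (pmul a b) M = chi a M * chi b M.
Proof.
rewrite /commsign anticommMl.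
by case: (anticomm a M); case: (anticomm b M); rewrite /= ?mulr1 ?mul1r ?mulrNN ?mulr1.
Qed.
Lemma commsignMr a b M : chi M (pmul a b) = chi M a * chi M b.
Proof. by rewrite !(commsignC M) commsignMl. Qed.
Lemma commsign_idl M : chi (pid n) M = 1.
Proof. by rewrite /commsign anticomm_idl. Qed.
Lemma commsign_idr M : chi M (pid n) = 1.
Proof. by rewrite commsignC commsign_idl. Qed.
Lemma commsign_sq a M : chi a M * chi a M = 1.
Proof. by rewrite -commsignMl pmulxx commsign_idl. Qed.
Lemma commsign_pm a M : chi a M = 1 \/ chi a M = -1.
Proof. by rewrite /commsign; case: anticomm; [right|left]. Qed.
End Characters.
End PauliGroup.
Arguments pmulI {n} a.
Arguments pmulIr {n} a.

(** * Fourier analysis *)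

Lemma commsign_anti {R : nzRingType} n (a M : pauli n) :
  anticomm a M -> commsign a M = - 1 :> R.
Proof. by rewrite /commsign => ->. Qed.

Section Fourier.
Variables (R : numFieldType) (n : nat).
Implicit Types (a b e M : pauli n) (p q : pdist R n) (gam : {set 'I_n}).
Local Notation chi := (@commsign R n).
Local Notation N := (#|pauli n|%:R : R).

Lemma card_pauli_gt0 : 0 < N.
Proof. by rewrite ltr0n; apply/card_gt0P; exists (pid n). Qed.

Lemma card_pauli_neq0 : N != 0.
Proof. exact/lt0r_neq0/card_pauli_gt0. Qed.

Lemma sum_commsign M : \sum_a chi a M = if M == pid n then N else 0.
Proof.
case: eqP => [->|/eqP M1].
  by rewrite (eq_bigr (fun _ => 1)) ?sumr_const // => a _; rewrite commsign_idr.
have [d Md] := exists_anticomm M1.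
apply: (sumr_flip_eq0 (F := chi^~ M) (pmulIr d)) => a.
by rewrite /= commsignMl (commsignC d) (commsign_anti Md) mulrN1.
Qed.

Lemma sum_commsignM M M' : \sum_a chi a M * chi a M' = if M == M' then N else 0.
Proof.
by rewrite -pmul_eq_id -sum_commsign; apply: eq_bigr => a _; rewrite commsignMr.
Qed.

Definition fcoef (g : pauli n -> R) a : R := N^-1 * \sum_M g M * chi a M.

Lemma fourier_inv (g : pauli n -> R) M : g M = \sum_a fcoef g a * chi a M.
Proof.
transitivity (N^-1 * \sum_M' g M' * \sum_a chi a M' * chi a M).
  rewrite (bigD1 M) //= sum_commsignM eqxx big1 => [|M' /negbTE M'M].
    by rewrite addr0 mulrCA mulVf ?card_pauli_neq0 ?mulr1.
  by rewrite sum_commsignM M'M mulr0.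
rewrite mulr_sumr; under eq_bigr do rewrite mulr_sumr mulr_sumr.
rewrite exchange_big /=; apply: eq_bigr => a _.
by rewrite /fcoef -mulrA mulr_suml mulr_sumr; apply: eq_bigr => M' _; rewrite !mulrA.
Qed.

Lemma fcoef_local (g : pauli n -> R) gam a :
  (forall M M', {in gam, forall i, M i = M' i} -> g M = g M') ->
  ~~ (supp a \subset gam) -> fcoef g a = 0.
Proof.
move=> g_local /subsetPn [i]; rewrite inE => ai i_gam.
set d := site i (anti_partner1 (a i)).
have ad : anticomm a d by apply: anticomm_site_partner.
rewrite /fcoef (sumr_flip_eq0 (F := fun M => g M * chi a M) (pmulIr d)) ?mulr0 // => M /=.
rewrite commsignMr (commsign_anti ad) mulrN1 mulrN; congr (- (_ * _)).
apply: g_local => j j_gam; rewrite pmulE ffunE.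
by case: eqP => [ji|_]; [move: j_gam; rewrite ji (negbTE i_gam) | rewrite mul1_idr].
Qed.

Lemma Lambda_conv p q M : Lambda (conv p q) M = Lambda p M * Lambda q M.
Proof.
rewrite /Lambda mulr_suml; under eq_bigr do rewrite ffunE mulr_suml.
rewrite exchange_big /=; apply: eq_bigr => a _.
rewrite (reindex_inj (pmulI a)) /= mulr_sumr; apply: eq_bigr => e _.
by rewrite pmulK commsignMl mulrACA.
Qed.

Lemma Lambda_dirac M : Lambda (dirac_id R n) M = 1.
Proof.
rewrite /Lambda (bigD1 (pid n)) //= big1 => [|e /negbTE e1]; last by rewrite ffunE e1 mul0r.
by rewrite ffunE eqxx mul1r commsign_idl addr0.
Qed.

Lemma Lambda_total (Gam : {set {set 'I_n}}) (P : {set 'I_n} -> pdist R n) M :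
  Lambda (total_dist Gam P) M = \prod_(g in Gam) Lambda (P g) M.
Proof.
rewrite /total_dist; apply: (big_morph (fun p => Lambda p M)) => [p q|].
  exact: Lambda_conv.
exact: Lambda_dirac.
Qed.

Lemma fcoef_Lambda p e : fcoef (Lambda p) e = p e.
Proof.
rewrite [RHS](fourier_inv p e) /fcoef mulr_sumr; apply: eq_bigr => a _.
rewrite mulrA commsignC; congr (_ * _ * _); apply: eq_bigr => M _.
by rewrite commsignC.
Qed.

Lemma Lambda_inj p q : Lambda p =1 Lambda q -> p = q.
Proof.
move=> pq; apply/ffunP=> e; rewrite -fcoef_Lambda -[RHS]fcoef_Lambda.
by congr (_ * _); apply: eq_bigr => M _; rewrite pq.
Qed.

Lemma Lambda_local gam p M M' :
  (forall e, ~~ (supp e \subset gam) -> p e = 0) ->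
  {in gam, forall i, M i = M' i} -> Lambda p M = Lambda p M'.
Proof.
move=> p_local MM'; apply: eq_bigr => e _.
case: (boolP (supp e \subset gam)) => [/subsetP e_gam|/p_local ->]; last by rewrite !mul0r.
rewrite /commsign /anticomm.
have -> // : [set i | anti1 (e i) (M i)] = [set i | anti1 (e i) (M' i)].
apply/setP=> i; rewrite !inE; case: (boolP (i \in gam)) => [/MM' -> //|i_gam].
suff -> : e i = PI by rewrite !anti1_idl.
by apply/eqP; apply: contraR i_gam => ei; apply: e_gam; rewrite inE.
Qed.
End Fourier.

Section SyndromeCharacters.
Variables (R : numFieldType) (n m : nat) (gens : 'I_m -> pauli n).
Implicit Types (a e : pauli n) (S : {set 'I_m}) (s t : {ffun 'I_m -> bool}).
Local Notation NS := (#|{set 'I_m}|%:R : R).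

Definition syndrome_char s S : R := \prod_(i in S) (if s i then -1 else 1).

Lemma commsign_mgen e S : commsign e (mgen gens S) = syndrome_char (syndrome gens e) S.
Proof.
rewrite /mgen (big_morph (commsign e) (fun x y => commsignMr x y e) (commsign_idr e)).
by apply: eq_bigr => i _; rewrite ffunE.
Qed.

Lemma syndrome_id : syndrome gens (pid n) = trivial_syndrome m.
Proof. by apply/ffunP=> i; rewrite !ffunE anticomm_idl. Qed.

Lemma syndrome_charM s t S :
  syndrome_char s S * syndrome_char t S = syndrome_char [ffun i => s i (+) t i] S.
Proof.
rewrite -big_split /=; apply: eq_bigr => i _; rewrite ffunE.
by case: (s i); case: (t i); rewrite /= ?mulrNN ?mulr1 ?mul1r.
Qed.

Lemma sum_syndrome_char s : \sum_S syndrome_char s S = if s == trivial_syndrome m then NS else 0.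
Proof.
case: eqP => [->|/eqP s0].
  rewrite (eq_bigr (fun _ => 1)) ?sumr_const // => S _.
  by rewrite /syndrome_char big1 // => i; rewrite ffunE.
have [i si] : exists i, s i.
  apply/existsP; apply: contraR s0 => /existsPn s0.
  by apply/eqP/ffunP=> i; rewrite ffunE; apply/negbTE.
pose toggle S := if i \in S then S :\ i else i |: S.
have toggleK : involutive toggle.
  by move=> S; rewrite /toggle; case: (boolP (i \in S)) => iS; rewrite !inE eqxx /= ?setD1K ?setU1K.
apply: (sumr_flip_eq0 (F := syndrome_char s) (inv_inj toggleK)) => S.
rewrite /toggle /syndrome_char; case: (boolP (i \in S)) => iS.
  by rewrite [in RHS](big_setD1 i iS) /= si mulN1r opprK.
by rewrite big_setU1 //= si mulN1r.
Qed.

Lemma sum_syndrome_charM s t :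
  \sum_S syndrome_char s S * syndrome_char t S = if s == t then NS else 0.
Proof.
under eq_bigr do rewrite syndrome_charM.
rewrite sum_syndrome_char; congr (if _ then _ else _).
apply/eqP/eqP => [st|->]; last by apply/ffunP=> i; rewrite !ffunE addbb.
by apply/ffunP=> i; move/ffunP: st => /(_ i); rewrite !ffunE; case: (s i); case: (t i).
Qed.

Lemma syndrome_char_inv (C : pauli n -> R) s :
  \sum_S syndrome_char s S * (\sum_a C a * syndrome_char (syndrome gens a) S) =
  NS * \sum_(a | syndrome gens a == s) C a.
Proof.
under eq_bigr do rewrite mulr_sumr.
rewrite exchange_big /= mulr_sumr [RHS]big_mkcond /=; apply: eq_bigr => a _.
under eq_bigr do rewrite mulrCA.
by rewrite -mulr_sumr sum_syndrome_charM eq_sym; case: eqP; rewrite ?mulr0 // mulrC.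
Qed.
End SyndromeCharacters.

(** * Logarithmic coefficients *)

Lemma ln_prod (R : realType) (I : finType) (A : {pred I}) (F : I -> R) :
  (forall i, i \in A -> 0 < F i) -> ln (\prod_(i in A) F i) = \sum_(i in A) ln (F i).
Proof.
move=> F_gt0.
suff [] : 0 < \prod_(i in A) F i /\ ln (\prod_(i in A) F i) = \sum_(i in A) ln (F i) by [].
apply: (big_rec2 (fun x y => 0 < x /\ ln x = y)); first by rewrite ln1.
move=> i x y iA [x_gt0 <-]; have Fi_gt0 := F_gt0 i iA.
by split; [rewrite mulr_gt0 | rewrite lnM ?posrE].
Qed.

Section LogCoefficients.
Variables (R : realType) (n : nat).
Implicit Types (a e M : pauli n) (p q : pdist R n) (gam : {set 'I_n}).
Local Notation chi := (@commsign R n).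

Lemma Lambda_id p : Lambda p (pid n) = \sum_e p e.
Proof. by apply: eq_bigr => e _; rewrite commsign_idr mulr1. Qed.

Lemma Lambda_gt0 gam p M : valid_local gam p -> 0 < Lambda p M.
Proof.
case=> p_ge0 p_sum1 _ p_id _.
have rest : \sum_(e | e != pid n) p e = 1 - p (pid n).
  by rewrite -p_sum1 [in RHS](bigD1 (pid n)) //= addrC addrK.
rewrite /Lambda (bigD1 (pid n)) //= commsign_idl mulr1.
have : - \sum_(e | e != pid n) p e <= \sum_(e | e != pid n) p e * chi e M.
  rewrite -sumrN; apply: ler_sum => e _.
  by case: (commsign_pm (R := R) e M) => ->; have := p_ge0 e; lra.
by rewrite rest; lra.
Qed.

Definition logcoef p a : R := fcoef (fun M => ln (Lambda p M)) a.

Lemma ln_Lambda_expand p M : ln (Lambda p M) = \sum_a logcoef p a * chi a M.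
Proof. exact: (fourier_inv (fun M => ln (Lambda p M))). Qed.

Lemma logcoef_local gam p a : valid_local gam p -> ~~ (supp a \subset gam) -> logcoef p a = 0.
Proof.
case=> _ _ p_local _ _; apply: fcoef_local => M M' MM'.
by rewrite (Lambda_local p_local MM').
Qed.

Lemma logcoef_id gam p : valid_local gam p ->
  logcoef p (pid n) = - \sum_(a | a != pid n) logcoef p a.
Proof.
case=> _ p_sum1 _ _ _.
have : \sum_a logcoef p a = 0.
  rewrite (eq_bigr (fun a => logcoef p a * chi a (pid n))) => [|a _].
    by rewrite -ln_Lambda_expand Lambda_id p_sum1 ln1.
  by rewrite commsign_idr mulr1.
by rewrite (bigD1 (pid n)) //=; lra.
Qed.

Lemma logcoef_inj gam p q : valid_local gam p -> valid_local gam q ->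
  (forall a, a != pid n -> logcoef p a = logcoef q a) -> p = q.
Proof.
move=> p_valid q_valid pq.
have {}pq a : logcoef p a = logcoef q a.
  have [->|] := eqVneq a (pid n); last exact: pq.
  by rewrite (logcoef_id p_valid) (logcoef_id q_valid); congr (- _); apply: eq_bigr.
apply: Lambda_inj => M.
apply: ln_inj; rewrite ?posrE ?(Lambda_gt0 M p_valid) ?(Lambda_gt0 M q_valid) //.
by rewrite !ln_Lambda_expand; apply: eq_bigr => a _; rewrite pq.
Qed.

Lemma Lambda_total_gt0 (Gam : {set {set 'I_n}}) (P : {set 'I_n} -> pdist R n) M :
  valid_family Gam P -> 0 < Lambda (total_dist Gam P) M.
Proof.
move=> P_valid; rewrite Lambda_total; apply: prodr_gt0 => g g_Gam.
exact: Lambda_gt0 (P_valid g g_Gam).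
Qed.
End LogCoefficients.

Section SyndromeLogSums.
Variables (R : realType) (n m : nat) (gens : 'I_m -> pauli n) (Gam : {set {set 'I_n}}).
Implicit Types (a b e : pauli n) (P : {set 'I_n} -> pdist R n) (s : {ffun 'I_m -> bool}).
Local Notation NS := (#|{set 'I_m}|%:R : R).

Definition logcoef_total P a : R := \sum_(g in Gam) logcoef (P g) a.

Lemma ln_Lambda_total P M : valid_family Gam P ->
  ln (Lambda (total_dist Gam P) M) = \sum_a logcoef_total P a * commsign a M.
Proof.
move=> P_valid; rewrite Lambda_total ln_prod => [|g g_Gam]; last first.
  exact: Lambda_gt0 (P_valid g g_Gam).
under eq_bigr do rewrite ln_Lambda_expand.
by rewrite exchange_big /=; apply: eq_bigr => a _; rewrite /logcoef_total mulr_suml.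
Qed.

Definition syndrome_logsum (d : {ffun {set 'I_m} -> R}) s : R :=
  NS^-1 * \sum_S syndrome_char R s S * ln (d S).

Lemma syndrome_logsum_data P s : valid_family Gam P ->
  syndrome_logsum (syndrome_data gens Gam P) s = \sum_(a | syndrome gens a == s) logcoef_total P a.
Proof.
move=> P_valid; rewrite /syndrome_logsum.
under eq_bigr do rewrite ffunE ln_Lambda_total //.
under eq_bigr do under eq_bigr do rewrite commsign_mgen.
by rewrite syndrome_char_inv mulKf // pnatr_eq0 -lt0n; apply/card_gt0P; exists set0.
Qed.
End SyndromeLogSums.

(** * Unique syndromes make the channels learnable *)

Lemma logcoef_out (R : realType) n (gam : {set 'I_n}) (p : pdist R n) a :
  valid_local gam p -> a != pid n -> ~~ in_Egamma gam a -> logcoef p a = 0.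
Proof. by move=> p_valid a1; rewrite /in_Egamma a1; apply: logcoef_local. Qed.

Section Sufficiency.
Variables (R : realType) (n m : nat) (gens : 'I_m -> pauli n) (Gam : {set {set 'I_n}}).
Implicit Types (a b e : pauli n) (P Q : {set 'I_n} -> pdist R n).
Local Notation learnable := (@learnable R _ n m gens Gam).

Lemma logcoef_total_out Q b : valid_family Gam Q -> b != pid n -> ~~ in_Ebar Gam b ->
  logcoef_total Gam Q b = 0.
Proof.
move=> Q_valid b1 /existsPn b_out; apply: big1 => g g_Gam.
by apply: logcoef_out (Q_valid g g_Gam) b1 _; move: (b_out g); rewrite g_Gam.
Qed.

Lemma logcoef_total_learnable a :
  (forall Q b, valid_family Gam Q -> b != a -> syndrome gens b = syndrome gens a ->
     logcoef_total Gam Q b = 0) ->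
  learnable (fun P => logcoef_total Gam P a).
Proof.
move=> alone P P' P_valid P'_valid data_eq.
have logsum Q : valid_family Gam Q ->
    syndrome_logsum (syndrome_data gens Gam Q) (syndrome gens a) = logcoef_total Gam Q a.
  move=> Q_valid; rewrite syndrome_logsum_data // (bigD1 a) //= big1 ?addr0 //.
  by move=> b /andP [/eqP sb ba]; apply: alone.
by rewrite -logsum // -[RHS]logsum // data_eq.
Qed.

Lemma logcoef_learnable g a : g \in Gam ->
  (forall Q g' b, valid_family Gam Q -> g' \in Gam -> (g', b) != (g, a) ->
     syndrome gens b = syndrome gens a -> logcoef (Q g') b = 0) ->
  learnable (fun P => logcoef (P g) a).
Proof.
move=> g_Gam alone P P' P_valid P'_valid data_eq.
have total_eq Q : valid_family Gam Q -> logcoef_total Gam Q a = logcoef (Q g) a.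
  move=> Q_valid; rewrite /logcoef_total (bigD1 g) //= big1 ?addr0 // => g' /andP [g'_Gam g'g].
  by apply: alone; rewrite ?xpair_eqE ?(negbTE g'g).
rewrite -total_eq // -[RHS]total_eq //; apply: logcoef_total_learnable => // Q b Q_valid ba sba.
by apply: big1 => g' g'_Gam; apply: alone; rewrite ?xpair_eqE ?(negbTE ba) ?andbF.
Qed.

Lemma learnable_total_of_logcoef :
  (forall a, learnable (fun P => logcoef_total Gam P a)) -> learnable (fun P => total_dist Gam P).
Proof.
move=> lc_learn P P' P_valid P'_valid data_eq.
apply: Lambda_inj => M; apply: ln_inj; rewrite ?posrE ?Lambda_total_gt0 //.
by rewrite !ln_Lambda_total //; apply: eq_bigr => a _; rewrite (lc_learn a P P').
Qed.

Lemma learnable_local_of_logcoef g : g \in Gam ->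
  (forall a, in_Egamma g a -> learnable (fun P => logcoef (P g) a)) -> learnable (fun P => P g).
Proof.
move=> g_Gam lc_learn P P' P_valid P'_valid data_eq.
apply: (logcoef_inj (P_valid g g_Gam) (P'_valid g g_Gam)) => a a1.
have [a_g|a_out] := boolP (in_Egamma g a); first exact: lc_learn.
by rewrite (logcoef_out (P_valid g g_Gam) a1 a_out) (logcoef_out (P'_valid g g_Gam) a1 a_out).
Qed.

Lemma learnable_total_of_unique_syndromes :
  (forall e, in_Ebar Gam e ->
     syndrome gens e != trivial_syndrome m /\
     (forall e', in_Ebar Gam e' -> e' != e -> syndrome gens e' != syndrome gens e)) ->
  learnable (fun P => total_dist Gam P).
Proof.
move=> uniq; apply: learnable_total_of_logcoef => a.
have [a_out|a_in] := boolP ((a != pid n) && ~~ in_Ebar Gam a).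
  by case/andP: a_out => a1 a_out P P' P_valid P'_valid _; rewrite !logcoef_total_out.
have a_Ebar : a != pid n -> in_Ebar Gam a by move=> a1; move: a_in; rewrite a1 negbK.
apply: logcoef_total_learnable => Q b Q_valid ba sba.
have [b1|b1] := eqVneq b (pid n).
  have [] := uniq a (a_Ebar _); first by rewrite -b1 eq_sym.
  by rewrite -sba b1 syndrome_id eqxx.
have [b_in|b_out] := boolP (in_Ebar Gam b); last exact: logcoef_total_out.
have [b_triv b_uniq] := uniq b b_in.
have [a1|a1] := eqVneq a (pid n); first by move: b_triv; rewrite sba a1 syndrome_id eqxx.
by have [_ /(_ b b_in ba)] := uniq a (a_Ebar a1); rewrite sba eqxx.
Qed.

Lemma learnable_local_of_unique_syndromes g : g \in Gam ->
  (forall e, in_Egamma g e ->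
     syndrome gens e != trivial_syndrome m /\
     (forall g' e', g' \in Gam -> in_Egamma g' e' -> (g', e') != (g, e) ->
        syndrome gens e' != syndrome gens e)) ->
  learnable (fun P => P g).
Proof.
move=> g_Gam uniq; apply: learnable_local_of_logcoef => // a a_g.
have [a_triv a_uniq] := uniq a a_g.
apply: logcoef_learnable => // Q g' b Q_valid g'_Gam g'b sba.
have [b1|b1] := eqVneq b (pid n); first by move: a_triv; rewrite -sba b1 syndrome_id eqxx.
have [b_g'|b_out] := boolP (in_Egamma g' b); last exact: logcoef_out (Q_valid g' g'_Gam) b1 b_out.
by have := a_uniq g' b g'_Gam b_g' g'b; rewrite sba eqxx.
Qed.
End Sufficiency.

(** * Channel families with identical syndrome data *)

Lemma sumr_ifeq_mul (R : nzRingType) (T : finType) (y : T) (c : R) (F : T -> R) :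
  \sum_x (if x == y then c else 0) * F x = c * F y.
Proof.
rewrite (eq_bigr (fun x => if x == y then c * F x else 0)) => [|x _].
  by rewrite -big_mkcond big_pred1_eq.
by case: eqP; rewrite ?mul0r.
Qed.

Lemma sumr_ifeq (R : nzRingType) (T : finType) (y : T) (c : R) :
  \sum_x (if x == y then c else 0) = c.
Proof. by rewrite -big_mkcond big_pred1_eq. Qed.

Lemma supp_pmul_subr n (g : {set 'I_n}) (x f : pauli n) :
  supp f \subset g -> (supp (pmul x f) \subset g) = (supp x \subset g).
Proof.
move=> f_g; apply/idP/idP => [xf_g|x_g]; last exact: supp_pmul_sub.
by rewrite -(pmulKr f x); apply: supp_pmul_sub.
Qed.

Section ReferenceChannel.
Variables (R : realType) (n : nat).
Implicit Types (x e f M : pauli n) (p : pdist R n) (g : {set 'I_n}).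
Local Notation N := (#|pauli n|%:R : R).

Definition ref_weight : R := (4 * N)^-1.
Local Notation t := ref_weight.

Definition supp_count g : R := #|[pred x : pauli n | supp x \subset g]|%:R.

Definition ref_chan g : pdist R n :=
  [ffun x => (if supp x \subset g then t else 0) +
             (if x == pid n then 1 - supp_count g * t else 0)].

Lemma ref_weight_gt0 : 0 < t.
Proof. by rewrite invr_gt0 mulr_gt0 // card_pauli_gt0. Qed.

Lemma supp_count_weight g : t <= supp_count g * t <= 1/4.
Proof.
have count_ge1 : 1 <= supp_count g.
  by rewrite ler1n; apply/card_gt0P; exists (pid n); rewrite inE supp_id sub0set.
have count_le : supp_count g <= N by rewrite ler_nat max_card.
have tN : t * N = 1/4 by rewrite /ref_weight invfM -mulrA mulVf ?card_pauli_neq0 // mulr1 mul1r.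
by have := ref_weight_gt0; rewrite -/t => t_gt0; apply/andP; split; nra.
Qed.

Lemma ref_weight_le : t <= 1/4.
Proof. by have /andP[t_le kt_le] := supp_count_weight setT; lra. Qed.

Lemma ref_chanE g x :
  ref_chan g x = (if supp x \subset g then t else 0) +
                 (if x == pid n then 1 - supp_count g * t else 0).
Proof. by rewrite ffunE. Qed.

Lemma ref_sum g : \sum_x ref_chan g x = 1.
Proof.
under eq_bigr do rewrite ref_chanE.
rewrite big_split /= sumr_ifeq -big_mkcond /= sumr_const -mulr_natl.
by rewrite -/(supp_count g) mulrC addrC subrK.
Qed.

Lemma ref_id_ge g : 3/4 <= ref_chan g (pid n).
Proof.
rewrite ref_chanE eqxx supp_id sub0set; have /andP[t_le kt_le] := supp_count_weight g.
by have := ref_weight_gt0; lra.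
Qed.

Lemma ref_ge0 g x : 0 <= ref_chan g x.
Proof.
rewrite ref_chanE; have /andP[t_le kt_le] := supp_count_weight g; have := ref_weight_gt0.
by case: (_ \subset _); case: (_ == _); lra.
Qed.

Lemma ref_le1 g x : ref_chan g x <= 1.
Proof.
rewrite ref_chanE; have /andP[t_le kt_le] := supp_count_weight g.
have := ref_weight_le; have := ref_weight_gt0.
by case: (_ \subset _); case: (_ == _); lra.
Qed.

Lemma ref_in_ge g x : supp x \subset g -> t <= ref_chan g x.
Proof.
move=> x_g; rewrite ref_chanE x_g; have /andP[t_le kt_le] := supp_count_weight g.
by case: (_ == _); lra.
Qed.

Lemma ref_out g x : ~~ (supp x \subset g) -> ref_chan g x = 0.
Proof.
move=> x_out; rewrite ref_chanE (negbTE x_out).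
by case: eqP x_out => [->|_]; rewrite ?supp_id ?sub0set ?addr0.
Qed.

Lemma ref_nonid_le g x : x != pid n -> ref_chan g x <= t.
Proof.
move=> x1; rewrite ref_chanE (negbTE x1) addr0.
by have := ref_weight_gt0; case: (_ \subset _); lra.
Qed.

Lemma ref_valid g : valid_local g (ref_chan g).
Proof.
split; [exact: ref_ge0 | exact: ref_sum | exact: ref_out | |].
- by have := ref_id_ge g; lra.
- by move=> e _ e_g; have := ref_in_ge e_g; have := ref_weight_gt0; lra.
Qed.

Definition shift_chan p fr to (s : R) : pdist R n :=
  [ffun x => p x + (if x == to then s else 0) - (if x == fr then s else 0)].

Lemma Lambda_shift p fr to s M :
  Lambda (shift_chan p fr to s) M = Lambda p M + s * commsign to M - s * commsign fr M.
Proof.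
rewrite /Lambda; under eq_bigr do rewrite ffunE mulrBl mulrDl.
by rewrite big_split /= big_split /= sumrN !sumr_ifeq_mul.
Qed.

Lemma shift_ref_valid g fr to : to != fr -> in_Egamma g to -> supp fr \subset g ->
  valid_local g (shift_chan (ref_chan g) fr to (t / 2)).
Proof.
move=> to_fr /andP [to1 to_g] fr_g.
have t_gt0 := ref_weight_gt0; have t_le := ref_weight_le.
have shiftE x : shift_chan (ref_chan g) fr to (t / 2) x =
    ref_chan g x + (if x == to then t / 2 else 0) - (if x == fr then t / 2 else 0) by rewrite ffunE.
have fr_to : (fr == to) = false by rewrite eq_sym (negbTE to_fr).
split.
- move=> x; rewrite shiftE; have := ref_ge0 g x.
  have [->|_] := eqVneq x fr; last by case: (_ == _); lra.
  by rewrite fr_to; have := ref_in_ge fr_g; lra.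
- by rewrite (eq_bigr _ (fun x _ => shiftE x)) !big_split /= sumrN !sumr_ifeq ref_sum; lra.
- move=> x x_out; rewrite shiftE ref_out //.
  have x_to : (x == to) = false by apply: contraNF x_out => /eqP ->.
  have x_fr : (x == fr) = false by apply: contraNF x_out => /eqP ->.
  by rewrite x_to x_fr addr0 subr0.
- rewrite shiftE eq_sym (negbTE to1).
  by have := ref_id_ge g; case: (_ == _); lra.
- move=> x _ x_g; rewrite shiftE; have := ref_in_ge x_g.
  have [->|_] := eqVneq x fr; last by case: (_ == _); lra.
  by rewrite fr_to; lra.
Qed.

Definition twist_chan p f (a b : R) : pdist R n := [ffun x => a * p x + b * p (pmul x f)].

Lemma Lambda_twist p f a b M :
  Lambda (twist_chan p f a b) M = (a + b * commsign f M) * Lambda p M.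
Proof.
rewrite /Lambda; under eq_bigr do rewrite ffunE mulrDl.
rewrite big_split /= mulrDl !mulr_sumr; congr (_ + _).
  by apply: eq_bigr => x _; rewrite mulrA.
rewrite (reindex_inj (pmulIr f)) /=; apply: eq_bigr => x _.
by rewrite pmulKr commsignMl; ring.
Qed.

Lemma sum_twist p f a b : \sum_x twist_chan p f a b x = (a + b) * \sum_x p x.
Proof.
under eq_bigr do rewrite ffunE.
rewrite big_split /= -!mulr_sumr mulrDl; congr (_ + b * _).
by rewrite (reindex_inj (pmulIr f)) /=; apply: eq_bigr => x _; rewrite pmulKr.
Qed.

Lemma ref_twist_out g f x : supp f \subset g -> ~~ (supp x \subset g) ->
  ref_chan g x = 0 /\ ref_chan g (pmul x f) = 0.
Proof. by move=> f_g x_out; rewrite !ref_out ?supp_pmul_subr. Qed.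

Local Notation s := (t / 2).
Local Notation u := ((1 - t)^-1).

(* On every [M] with [[e, M]] = [[e', M]], the factors by which [twist_up g e]
   and [twist_down g' e'] multiply [Lambda] are mutually inverse, because
   ((1 - s)^2 - s^2) u = 1. *)
Definition twist_up g e := twist_chan (ref_chan g) e (1 - s) s.
Definition twist_down g e := twist_chan (ref_chan g) e (u * (1 - s)) (- (u * s)).

Lemma one_sub_ref_weight_gt0 : 0 < 1 - t.
Proof. by have := ref_weight_le; lra. Qed.

Lemma twist_unit : 0 < u /\ u * (1 - t) = 1.
Proof.
by rewrite invr_gt0 one_sub_ref_weight_gt0 mulVf // lt0r_neq0 // one_sub_ref_weight_gt0.
Qed.

Lemma twist_up_valid g e : in_Egamma g e -> valid_local g (twist_up g e).
Proof.
move=> /andP [e1 e_g]; have t_gt0 := ref_weight_gt0; have t_le := ref_weight_le.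
have twE x : twist_up g e x = (1 - s) * ref_chan g x + s * ref_chan g (pmul x e) by rewrite ffunE.
split.
- by move=> x; rewrite twE; have := ref_ge0 g x; have := ref_ge0 g (pmul x e); nra.
- by rewrite sum_twist ref_sum; lra.
- by move=> x x_out; rewrite twE; have [-> ->] := ref_twist_out e_g x_out; lra.
- by rewrite twE; have := ref_id_ge g; have := ref_ge0 g (pmul (pid n) e); nra.
- move=> x _ x_g; rewrite twE; have := ref_in_ge x_g.
  by have := ref_ge0 g (pmul x e); nra.
Qed.

Lemma twist_down_valid g e : in_Egamma g e -> valid_local g (twist_down g e).
Proof.
move=> /andP [e1 e_g]; have t_gt0 := ref_weight_gt0; have t_le := ref_weight_le.
have [u_gt0 uK] := twist_unit.
have twE x : twist_down g e x = u * ((1 - s) * ref_chan g x - s * ref_chan g (pmul x e)).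
  by rewrite ffunE; lra.
have in_gt0 x : supp x \subset g -> 0 < (1 - s) * ref_chan g x - s * ref_chan g (pmul x e).
  by move=> x_g; have := ref_in_ge x_g; have := ref_le1 g (pmul x e); nra.
split.
- move=> x; rewrite twE; apply: mulr_ge0; first lra.
  have [x_g|x_out] := boolP (supp x \subset g); first exact/ltW/in_gt0.
  by have [-> ->] := ref_twist_out e_g x_out; lra.
- by rewrite sum_twist ref_sum mulr1; lra.
- by move=> x x_out; rewrite twE; have [-> ->] := ref_twist_out e_g x_out; lra.
- rewrite twE; have := ref_id_ge g; have := ref_le1 g (pmul (pid n) e).
  set r1 := ref_chan g (pid n); set r2 := ref_chan g _ => r2_le r1_ge.
  have : u * ((1 - t) / 2) < u * ((1 - s) * r1 - s * r2) by rewrite ltr_pM2l //; nra.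
  by rewrite mulrA uK; lra.
- by move=> x _ x_g; rewrite twE; apply: mulr_gt0 => //; apply: in_gt0.
Qed.

Lemma twist_factors_cancel e e' M : commsign e M = commsign e' M :> R ->
  ((1 - s) + s * commsign e M) * (u * (1 - s) + - (u * s) * commsign e' M) = 1.
Proof.
move=> ee'; rewrite -ee'.
have : commsign e M * commsign e M = 1 :> R by rewrite commsign_sq.
set c : R := commsign e M => c_sq.
transitivity (u * ((1 - s) ^+ 2 - s ^+ 2 * (c * c))); first by ring.
by rewrite c_sq; field; rewrite lt0r_neq0 // one_sub_ref_weight_gt0.
Qed.

Lemma twist_factors_differ e e' M : anticomm (pmul e e') M ->
  ((1 - s) + s * commsign e M) * (u * (1 - s) + - (u * s) * commsign e' M) != 1.
Proof.
move=> ee'M; have : commsign e M * commsign e' M = -1 :> R by rewrite -commsignMl commsign_anti.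
have t_gt0 := ref_weight_gt0; have t_le := ref_weight_le; have [u_gt0 uK] := twist_unit.
by case: (commsign_pm (R := R) e M) => ->; case: (commsign_pm (R := R) e' M) => -> prod;
  apply/eqP; nra.
Qed.
End ReferenceChannel.

Lemma commsign_neq (R : realDomainType) n (e e' M : pauli n) :
  anticomm (pmul e e') M -> commsign e M != commsign e' M :> R.
Proof.
move=> ee'M; have : commsign e M * commsign e' M = -1 :> R by rewrite -commsignMl commsign_anti.
by case: (commsign_pm (R := R) e M) => ->; case: (commsign_pm (R := R) e' M) => -> prod;
  apply/eqP => eq_pm; nra.
Qed.

Section Confusable.
Variables (R : realType) (n m : nat) (gens : 'I_m -> pauli n) (Gam : {set {set 'I_n}}).
Implicit Types (P : {set 'I_n} -> pdist R n) (p : pdist R n) (e f M : pauli n).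
Local Notation t := (ref_weight R n).

Definition confusable g e e' := exists P P' : {set 'I_n} -> pdist R n,
  [/\ valid_family Gam P, valid_family Gam P',
      syndrome_data gens Gam P = syndrome_data gens Gam P', P g <> P' g &
      (e' != e -> total_dist Gam P <> total_dist Gam P')].

Definition update P g p : {set 'I_n} -> pdist R n := fun g' => if g' == g then p else P g'.

Definition ref_family : {set 'I_n} -> pdist R n := fun g => ref_chan R g.

Lemma ref_family_valid : valid_family Gam ref_family.
Proof. by move=> g _; apply: ref_valid. Qed.

Lemma update_valid P g p : valid_family Gam P -> valid_local g p -> valid_family Gam (update P g p).
Proof.
move=> P_valid p_valid g' g'_Gam.
by rewrite /update; case: eqP => [->|_]; last exact: P_valid.
Qed.

Lemma Lambda_total_update P g p M : g \in Gam ->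
  Lambda (total_dist Gam (update P g p)) M =
  Lambda p M * \prod_(g' in Gam | g' != g) Lambda (P g') M.
Proof.
move=> g_Gam; rewrite Lambda_total (bigD1 g) //= /update eqxx; congr (_ * _).
by apply: eq_bigr => g' /andP [_ /negbTE ->].
Qed.

Lemma data_eq_of_Lambda P P' :
  (forall g S, g \in Gam -> Lambda (P g) (mgen gens S) = Lambda (P' g) (mgen gens S)) ->
  syndrome_data gens Gam P = syndrome_data gens Gam P'.
Proof. by move=> PP'; apply/ffunP=> S; rewrite !ffunE !Lambda_total; apply: eq_bigr => g /PP'. Qed.

Lemma confusable_within g fr to : g \in Gam -> to != fr -> in_Egamma g to ->
  supp fr \subset g -> syndrome gens fr = syndrome gens to -> confusable g to fr.
Proof.
move=> g_Gam to_fr to_g fr_g s_fr_to.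
set p' := shift_chan (ref_chan R g) fr to (t / 2).
have t_gt0 := ref_weight_gt0 R n.
exists ref_family, (update ref_family g p'); split.
- exact: ref_family_valid.
- by apply: update_valid; [exact: ref_family_valid | exact: shift_ref_valid].
- apply: data_eq_of_Lambda => g' S _; rewrite /update; case: eqP => [->|//].
  by rewrite Lambda_shift !commsign_mgen s_fr_to addrK.
- rewrite /update eqxx => /ffunP /(_ to).
  rewrite /p' [in X in _ = X]ffunE eqxx (negbTE to_fr) subr0.
  by rewrite /ref_family; lra.
- move=> _; have [M M_anti] : exists M, anticomm (pmul to fr) M.
    by apply: exists_anticomm; rewrite pmul_eq_id.
  move=> /(congr1 (fun p => Lambda p M)) /=.
  rewrite Lambda_total_update // Lambda_total (bigD1 g) //=.
  rewrite /p' Lambda_shift /ref_family; set Q := \prod_(_ in _ | _) _.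
  have Q_gt0 : 0 < Q by apply: prodr_gt0 => g' _; apply: (Lambda_gt0 M (ref_valid R g')).
  move=> /eqP; rewrite -subr_eq0 -mulrBl mulf_eq0 (gt_eqF Q_gt0) orbF => /eqP L_eq.
  have : t / 2 * (commsign to M - commsign fr M) = 0 by lra.
  by apply/eqP; rewrite mulf_eq0 subr_eq0 (negbTE (commsign_neq R M_anti)) orbF gt_eqF //; lra.
Qed.

Lemma confusable_across g g' e e' : g \in Gam -> g' \in Gam -> g != g' ->
  in_Egamma g e -> in_Egamma g' e' -> syndrome gens e' = syndrome gens e -> confusable g e e'.
Proof.
move=> g_Gam g'_Gam gg' e_g e'_g' s_e'e.
set P' := update (update ref_family g' (twist_down R g' e')) g (twist_up R g e).
pose up M := (1 - t / 2) + t / 2 * commsign e M.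
pose down M := (1 - t)^-1 * (1 - t / 2) + - ((1 - t)^-1 * (t / 2)) * commsign e' M.
have Lambda_P' M :
    Lambda (total_dist Gam P') M = up M * down M * Lambda (total_dist Gam ref_family) M.
  have factor g'' : Lambda (P' g'') M =
      (if g'' == g then up M else if g'' == g' then down M else 1) * Lambda (ref_family g'') M.
    rewrite /P' /update; case: eqP => [->|_]; [|case: eqP => [->|_]];
    by rewrite ?Lambda_twist ?mul1r.
  rewrite !Lambda_total (eq_bigr _ (fun g'' _ => factor g'')) big_split /=; congr (_ * _).
  have g'g : (g' == g) = false by rewrite eq_sym (negbTE gg').
  rewrite (bigD1 g) //= eqxx (bigD1 g') /= ?g'_Gam ?g'g ?eqxx //.
  by rewrite big1 ?mulr1 // => g'' /andP [/andP [_ /negbTE ->] /negbTE ->].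
exists ref_family, P'; split.
- exact: ref_family_valid.
- apply: update_valid; last exact: twist_up_valid.
  by apply: update_valid; [exact: ref_family_valid | exact: twist_down_valid].
- apply/ffunP=> S; rewrite !ffunE Lambda_P' twist_factors_cancel ?mul1r //.
  by rewrite !commsign_mgen s_e'e.
- rewrite /P' /update eqxx => /ffunP /(_ e); rewrite [in X in _ = X]ffunE pmulxx /ref_family.
  have := ref_nonid_le R g (andP e_g).1; have := ref_id_ge R g.
  have := ref_weight_gt0 R n; have := ref_weight_le R n; nra.
- move=> e'e; have [M M_anti] : exists M, anticomm (pmul e e') M.
    by apply: exists_anticomm; rewrite pmul_eq_id eq_sym.
  move=> /(congr1 (fun p => Lambda p M)) /=; rewrite Lambda_P' => L_eq.
  have L_gt0 := Lambda_total_gt0 M ref_family_valid.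
  have : (1 - up M * down M) * Lambda (total_dist Gam ref_family) M = 0.
    by rewrite mulrBl mul1r -L_eq subrr.
  by apply/eqP; rewrite mulf_eq0 (gt_eqF L_gt0) orbF subr_eq0 eq_sym twist_factors_differ.
Qed.

Lemma confusable_shared_syndrome g e g' e' : g \in Gam -> g' \in Gam ->
  in_Egamma g e -> in_Egamma g' e' -> (g', e') != (g, e) ->
  syndrome gens e' = syndrome gens e -> confusable g e e'.
Proof.
move=> g_Gam g'_Gam e_g e'_g' g'e'_ge s_e'e.
have [g'g|g'g] := eqVneq g' g.
  move: g'e'_ge e'_g'; rewrite g'g xpair_eqE eqxx /= => e'e /andP [_ e'_g].
  by apply: confusable_within => //; rewrite eq_sym.
by apply: (confusable_across (g' := g')) => //; rewrite eq_sym.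
Qed.

Lemma confusable_trivial_syndrome g e : g \in Gam -> in_Egamma g e ->
  syndrome gens e = trivial_syndrome m -> confusable g e (pid n).
Proof.
move=> g_Gam e_g s_e; apply: confusable_within; rewrite ?supp_id ?sub0set ?syndrome_id //.
by case/andP: e_g.
Qed.

Lemma unique_syndromes_of_learnable_total :
  learnable gens Gam (fun P : {set 'I_n} -> pdist R n => total_dist Gam P) ->
  forall e, in_Ebar Gam e ->
    syndrome gens e != trivial_syndrome m /\
    (forall e', in_Ebar Gam e' -> e' != e -> syndrome gens e' != syndrome gens e).
Proof.
move=> learn e /existsP [g /andP [g_Gam e_g]].
have not_confusable e' : e' != e -> ~ confusable g e e'.
  by move=> e'e [P [P' [P_valid P'_valid data_eq _ total_ne]]]; exact/(total_ne e'e)/learn.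
split.
  apply/eqP => s_e; apply: (not_confusable (pid n)); last exact: confusable_trivial_syndrome.
  by rewrite eq_sym; case/andP: e_g.
move=> e' /existsP [g' /andP [g'_Gam e'_g']] e'e; apply/eqP => s_e'e.
apply: (not_confusable e' e'e); apply: (confusable_shared_syndrome (g' := g')) => //.
by rewrite xpair_eqE negb_and e'e orbT.
Qed.

Lemma unique_syndromes_of_learnable_local g : g \in Gam ->
  learnable gens Gam (fun P : {set 'I_n} -> pdist R n => P g) ->
  forall e, in_Egamma g e ->
    syndrome gens e != trivial_syndrome m /\
    (forall g' e', g' \in Gam -> in_Egamma g' e' -> (g', e') != (g, e) ->
       syndrome gens e' != syndrome gens e).
Proof.
move=> g_Gam learn e e_g.
have not_confusable e' : ~ confusable g e e'.
  by move=> [P [P' [P_valid P'_valid data_eq P_ne _]]]; exact/P_ne/learn.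
split; first by apply/eqP => s_e; apply/not_confusable/confusable_trivial_syndrome.
move=> g' e' g'_Gam e'_g' g'e'_ge; apply/eqP => s_e'e.
exact: (not_confusable e' (confusable_shared_syndrome g_Gam g'_Gam e_g e'_g' g'e'_ge s_e'e)).
Qed.
End Confusable.

(** * Estimating syndrome class rates *)

Lemma ln_ge_one_sub_inv (R : realType) (z : R) : 0 < z -> 1 - z^-1 <= ln z.
Proof.
move=> z_gt0; have zV_gt0 : 0 < z^-1 by rewrite invr_gt0.
have := @le_ln1Dx R (z^-1 - 1); rewrite addrCA subrr addr0 lnV ?posrE //.
by move=> ln_le; have := ln_le ltac:(lra); lra.
Qed.

Lemma ln_one_sub_bound (R : realType) (x : R) :
  0 <= x -> x <= 1/2 -> `|ln (1 - x) + x| <= 2 * x ^+ 2.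
Proof.
move=> x_ge0 x_le; have y_gt0 : 0 < 1 - x by lra.
have up : ln (1 - x) <= - x by apply: le_ln1Dx; lra.
have lo := ln_ge_one_sub_inv y_gt0.
have v_gt0 : 0 < (1 - x)^-1 by rewrite invr_gt0.
have vK : (1 - x)^-1 * (1 - x) = 1 by rewrite mulVf // gt_eqF.
have hint : 0 <= (1 - x)^-1 * (x ^+ 2 * (1 - 2 * x)) by rewrite mulr_ge0 ?mulr_ge0 ?sqr_ge0 //; lra.
by rewrite ler_norml; apply/andP; split; nra.
Qed.

Lemma sqr_sum_le (R : realFieldType) (T : finType) (A : pred T) (F : T -> R) :
  (\sum_(i | A i) F i) ^+ 2 <= #|A|%:R * \sum_(i | A i) F i ^+ 2.
Proof.
set S2 := \sum_(i | A i) F i ^+ 2.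
have double_sum : \sum_(i | A i) \sum_(j | A j) (F i ^+ 2 + F j ^+ 2) = 2 * (#|A|%:R * S2).
  transitivity (\sum_(i | A i) (F i ^+ 2 *+ #|A| + S2)).
    by apply: eq_bigr => i _; rewrite big_split /= sumr_const.
  by rewrite big_split /= sumrMnl sumr_const -/S2 -mulr_natl; ring.
suff : (\sum_(i | A i) F i) ^+ 2 * 2 <= \sum_(i | A i) \sum_(j | A j) (F i ^+ 2 + F j ^+ 2).
  by rewrite double_sum; lra.
rewrite expr2 !mulr_suml; apply: ler_sum => i _; rewrite mulr_sumr mulr_suml; apply: ler_sum => j _.
by have := sqr_ge0 (F i - F j); nra.
Qed.

Section ClassRate.
Variables (R : realType) (n : nat).
Implicit Types (a e M : pauli n) (p : pdist R n) (g : {set 'I_n}).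
Local Notation N := (#|pauli n|%:R : R).
Local Notation chi := (@commsign R n).

Lemma sum_pauli_const (c : R) : \sum_(M : pauli n) c = c * N.
Proof. by rewrite sumr_const mulr_natr. Qed.

Definition nonid_rate p : R := \sum_(e | e != pid n) p e.

Lemma nonid_rate_ge0 g p : valid_local g p -> 0 <= nonid_rate p.
Proof. by case=> p_ge0 _ _ _ _; apply: sumr_ge0. Qed.

Lemma nonid_rate_sqr_le g p : valid_local g p ->
  nonid_rate p ^+ 2 <= N * \sum_(e | in_Egamma g e) p e ^+ 2.
Proof.
case=> _ _ p_local _ _.
have -> : nonid_rate p = \sum_(e | in_Egamma g e) p e.
  rewrite /nonid_rate [RHS]big_mkcond [LHS]big_mkcond; apply: eq_bigr => e _.
  rewrite /in_Egamma; case: (e != pid n) => //=.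
  by case: (boolP (supp e \subset g)) => // /p_local ->.
apply: le_trans (sqr_sum_le _ _) _; apply: ler_wpM2r.
  by apply: sumr_ge0 => e _; exact: sqr_ge0.
by rewrite ler_nat max_card.
Qed.

Lemma one_sub_Lambda_bound g p M : valid_local g p -> 0 <= 1 - Lambda p M <= 2 * nonid_rate p.
Proof.
move=> p_valid; have [p_ge0 p_sum1 _ _ _] := p_valid.
have -> : 1 - Lambda p M = \sum_e p e * (1 - chi e M).
  by rewrite -[X in X - _ = _]p_sum1 /Lambda -sumrB; apply: eq_bigr => e _; ring.
apply/andP; split.
  by apply: sumr_ge0 => e _; apply: mulr_ge0 => //; case: (commsign_pm (R := R) e M) => ->; lra.
rewrite (bigD1 (pid n)) //= commsign_idl subrr mulr0 add0r /nonid_rate mulr_sumr.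
by apply: ler_sum => e _; have := p_ge0 e; case: (commsign_pm (R := R) e M) => ->; lra.
Qed.

Lemma logcoef_close g p a : valid_local g p -> a != pid n -> nonid_rate p <= 1/4 ->
  `|logcoef p a - p a| <= 8 * nonid_rate p ^+ 2.
Proof.
move=> p_valid a1 r_le; have r_ge0 := nonid_rate_ge0 p_valid.
have N_gt0 := card_pauli_gt0 R n.
have sum_chi : \sum_M chi a M = 0.
  by rewrite (eq_bigr (chi^~ a)) => [|M _]; rewrite ?sum_commsign ?(negbTE a1) // commsignC.
(* [p a] is the coefficient of [Lambda p] on [chi a]; adding the constant 1 does not change it. *)
have -> : logcoef p a - p a = N^-1 * \sum_M (ln (Lambda p M) + (1 - Lambda p M)) * chi a M.
  rewrite /logcoef -(fcoef_Lambda p a) /fcoef -mulrBr; congr (_ * _).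
  under [RHS]eq_bigr do rewrite mulrDl mulrBl mul1r.
  by rewrite big_split /= sumrB sum_chi sub0r.
have Ninv_ge0 : 0 <= N^-1 by rewrite invr_ge0 ltW.
rewrite normrM (ger0_norm Ninv_ge0).
apply: (@le_trans _ _ (N^-1 * \sum_(M : pauli n) 8 * nonid_rate p ^+ 2)); last first.
  by rewrite sum_pauli_const mulrCA mulVf ?mulr1 // gt_eqF.
rewrite ler_wpM2l //; apply: le_trans (ler_norm_sum _ _ _) _.
apply: ler_sum => M _; rewrite normrM.
have -> : `|chi a M| = 1 by case: (commsign_pm (R := R) a M) => ->; rewrite ?normrN normr1.
have /andP [x_ge0 x_le] := one_sub_Lambda_bound M p_valid.
have := ln_one_sub_bound x_ge0 ltac:(lra); rewrite subKr mulr1 => /le_trans; apply.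
have : (1 - Lambda p M) ^+ 2 <= (2 * nonid_rate p) ^+ 2 by rewrite ler_sqr ?nnegrE //; lra.
by rewrite !expr2; nra.
Qed.

Lemma sum_logcoef_close g p (A : pred (pauli n)) : valid_local g p ->
  (forall a, A a -> a != pid n) -> N * \sum_(e | in_Egamma g e) p e ^+ 2 <= 1/16 ->
  `|\sum_(a | A a) (logcoef p a - p a)| <= 8 * N ^+ 2 * \sum_(e | in_Egamma g e) p e ^+ 2.
Proof.
move=> p_valid A_nonid; set Q := \sum_(e | _) _ => small.
have r_sq : nonid_rate p ^+ 2 <= N * Q := nonid_rate_sqr_le p_valid.
have r_ge0 := nonid_rate_ge0 p_valid.
have N_ge0 : 0 <= N by rewrite ler0n.
have r_le : nonid_rate p <= 1/4 by nra.
apply: le_trans (ler_norm_sum _ _ _) _.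
apply: (@le_trans _ _ (\sum_(a | A a) 8 * nonid_rate p ^+ 2)).
  by apply: ler_sum => a Aa; apply: logcoef_close p_valid (A_nonid a Aa) r_le.
apply: (@le_trans _ _ (\sum_(a : pauli n) 8 * nonid_rate p ^+ 2)).
  rewrite [X in X <= _]big_mkcond /=; apply: ler_sum => a _.
  by case: (A a) => //; rewrite mulr_ge0 ?sqr_ge0.
by rewrite sum_pauli_const; nra.
Qed.
End ClassRate.

Section ClassRateEstimate.
Variables (R : realType) (n m : nat) (gens : 'I_m -> pauli n) (Gam : {set {set 'I_n}}).
Implicit Types (P : {set 'I_n} -> pdist R n) (s : {ffun 'I_m -> bool}).
Local Notation N := (#|pauli n|%:R : R).

Lemma syndrome_logsum_sub_classRate P s : valid_family Gam P -> s != trivial_syndrome m ->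
  syndrome_logsum (syndrome_data gens Gam P) s - classRate gens Gam P s =
  \sum_(g in Gam) \sum_(a | in_Egamma g a && (syndrome gens a == s)) (logcoef (P g) a - P g a).
Proof.
move=> P_valid s_nontriv.
rewrite syndrome_logsum_data // /logcoef_total exchange_big /= /classRate -sumrB.
apply: eq_bigr => g g_Gam; rewrite sumrB; congr (_ - _).
rewrite big_mkcond [RHS]big_mkcond; apply: eq_bigr => a _.
have [s_a|] := eqVneq (syndrome gens a) s; rewrite ?andbF ?andbT //.
have [//|a_out] := boolP (in_Egamma g a).
apply: logcoef_out (P_valid g g_Gam) _ a_out.
by apply: contra_neq s_nontriv => a1; rewrite -s_a a1 syndrome_id.
Qed.

Lemma class_rate_estimate s : s != trivial_syndrome m ->
  exists (f : {ffun {set 'I_m} -> R} -> R) (K delta : R),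
    0 < K /\ 0 < delta /\
    forall P, valid_family Gam P -> normsqC gens Gam P s <= delta ->
      `| f (syndrome_data gens Gam P) - classRate gens Gam P s | <= K * normsqC gens Gam P s.
Proof.
move=> s_nontriv.
have N_gt0 := card_pauli_gt0 R n.
exists (fun d => syndrome_logsum d s), (8 * N ^+ 2), (16 * N)^-1.
split; first by rewrite mulr_gt0 // exprn_gt0.
split; first by rewrite invr_gt0 mulr_gt0.
move=> P P_valid small; rewrite syndrome_logsum_sub_classRate //.
set Q := fun g => \sum_(e | in_Egamma g e) P g e ^+ 2.
have normsqCE : normsqC gens Gam P s = \sum_(g in Gam | g \in GammaC gens Gam s) Q g.
  by apply: eq_bigl => g; rewrite !inE andbA andbb.
apply: le_trans (ler_norm_sum _ _ _) _.
rewrite normsqCE mulr_sumr big_mkcondr /=; apply: ler_sum => g g_Gam.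
case: ifPn => [g_C|g_notC]; last first.
  rewrite big_pred0 ?normr0 // => a; apply/negP => /andP [a_g s_a].
  by move: g_notC; rewrite inE g_Gam /=; case/existsP; exists a; rewrite a_g s_a.
apply: (sum_logcoef_close (P_valid g g_Gam)) => [a /andP [/andP [] //]|].
have Qg_le : Q g <= (16 * N)^-1.
  apply: le_trans small; rewrite normsqCE (bigD1 g) ?g_Gam //= lerDl.
  by apply: sumr_ge0 => g' _; apply: sumr_ge0 => e _; exact: sqr_ge0.
have : N * Q g <= N * (16 * N)^-1 by rewrite ler_pM2l.
by rewrite invfM mulrCA mulfV ?gt_eqF // mulr1 mul1r.
Qed.
End ClassRateEstimate.

Unset Implicit Arguments.

Theorem theorem2 (R : realType) (n m : nat) (Gamma : {set {set 'I_n}})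
    (gens : 'I_m -> pauli n)
    (gens_comm : forall i j, ~~ anticomm (gens i) (gens j)) :
  (* 1. learnability of the total channel *)
  (learnable gens Gamma (fun P : {set 'I_n} -> pdist R n => total_dist Gamma P) <->
   (forall e, in_Ebar Gamma e ->
      syndrome gens e != trivial_syndrome m /\
      (forall e', in_Ebar Gamma e' -> e' != e -> syndrome gens e' != syndrome gens e)))
  /\
  (* 2. learnability of an individual channel N_gamma *)
  (forall gamma, gamma \in Gamma ->
    (learnable gens Gamma (fun P : {set 'I_n} -> pdist R n => P gamma) <->
     (forall e, in_Egamma gamma e ->
        syndrome gens e != trivial_syndrome m /\
        (forall gamma' e', gamma' \in Gamma -> in_Egamma gamma' e' ->
           (gamma', e') != (gamma, e) -> syndrome gens e' != syndrome gens e))))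
  /\
  (* 3. syndrome class rates are learnable up to O(||p^(Gamma_C)||^2) *)
  (forall s : {ffun 'I_m -> bool}, s != trivial_syndrome m ->
    (exists gamma e, gamma \in Gamma /\ in_Egamma gamma e /\ syndrome gens e = s) ->
    exists (f : {ffun {set 'I_m} -> R} -> R) (K delta : R),
      0 < K /\ 0 < delta /\
      forall P : {set 'I_n} -> pdist R n, valid_family Gamma P ->
        normsqC gens Gamma P s <= delta ->
        `| f (syndrome_data gens Gamma P) - classRate gens Gamma P s |
          <= K * normsqC gens Gamma P s).
Proof.
split; [split | split].
- exact: unique_syndromes_of_learnable_total.
- exact: learnable_total_of_unique_syndromes.
- move=> g g_Gam; split.
    exact: unique_syndromes_of_learnable_local.
  exact: learnable_local_of_unique_syndromes.
- by move=> s s_nontriv _; apply: class_rate_estimate.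
Qed.
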